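(* $\operatorname{BSR}(5,3)\ge 9$. In particular, the biquadratic form \[P(\mathbf{x},\mathbf{y})=x_1^2y_1^2+x_1^2y_2^2+x_2^2y_1^2+x_2^2y_3^2+x_3^2y_2^2+x_3^2y_3^2+x_4^2y_1^2+x_5^2y_2^2+(x_1y_3+x_4y_2)^2\] on $\mathbb{R}^5\times\mathbb{R}^3$ has SOS rank $9$ (i.e., it cannot be written as a sum of fewer than 9 squares of bilinear forms).
   Context: An $m\times n$ biquadratic form is a polynomial $P(\mathbf{x},\mathbf{y})=\sum_{i,k=1}^m\sum_{j,l=1}^n a_{ijkl}x_ix_ky_jy_l$ with real coefficients, $\mathbf{x}\in\mathbb{R}^m$, $\mathbf{y}\in\mathbb{R}^n$. It is SOS if $P=\sum_{p=1}^r f_p^2$ for some real bilinear forms $f_p(\mathbf{x},\mathbf{y})=\sum_{i,j}c^{(p)}_{ij}x_iy_j$; the least such $r$ is the SOS rank $\operatorname{sos}(P)$. $\operatorname{BSR}(m,n)$ is the maximum of $\operatorname{sos}(P)$ over all $m\times n$ SOS biquadratic forms $P$. *)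

From Stdlib Require Import Rdefinitions.
From HB Require Import structures.
From mathcomp Require Import all_boot all_order all_algebra.
From mathcomp Require Import Rstruct.
Set Implicit Arguments. Unset Strict Implicit. Unset Printing Implicit Defensive.
Import Order.TTheory GRing.Theory Num.Theory.
Local Open Scope ring_scope.

(* Points of R^m are functions 'I_m -> R (indices 0..m-1 instead of 1..m). *)

Definition biquad (m n : nat) (a : 'I_m -> 'I_n -> 'I_m -> 'I_n -> R)
  (x : 'I_m -> R) (y : 'I_n -> R) : R :=
  \sum_(i < m) \sum_(j < n) \sum_(k < m) \sum_(l < n)
     a i j k l * x i * x k * y j * y l.

Definition bilin (m n : nat) (c : 'M[R]_(m, n)) (x : 'I_m -> R) (y : 'I_n -> R) : R :=
  \sum_(i < m) \sum_(j < n) c i j * x i * y j.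

Definition sos_with (m n r : nat) (P : ('I_m -> R) -> ('I_n -> R) -> R) : Prop :=
  exists c : 'I_r -> 'M[R]_(m, n),
    forall x y, P x y = \sum_(p < r) (bilin (c p) x y) ^+ 2.

Definition is_sos (m n : nat) (P : ('I_m -> R) -> ('I_n -> R) -> R) : Prop :=
  exists r, sos_with r P.

Definition sos_rank (m n : nat) (P : ('I_m -> R) -> ('I_n -> R) -> R) (r : nat) : Prop :=
  sos_with r P /\ forall r', (r' < r)%N -> ~ sos_with r' P.

Definition BSR_ge (m n k : nat) : Prop :=
  exists a : 'I_m -> 'I_n -> 'I_m -> 'I_n -> R,
    is_sos (biquad a) /\ forall r, (r < k)%N -> ~ sos_with r (biquad a).

Definition P53 (x : 'I_5 -> R) (y : 'I_3 -> R) : R :=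
  let x1 := x (inord 0) in let x2 := x (inord 1) in let x3 := x (inord 2) in
  let x4 := x (inord 3) in let x5 := x (inord 4) in
  let y1 := y (inord 0) in let y2 := y (inord 1) in let y3 := y (inord 2) in
  x1^+2 * y1^+2 + x1^+2 * y2^+2 + x2^+2 * y1^+2 + x2^+2 * y3^+2
  + x3^+2 * y2^+2 + x3^+2 * y3^+2 + x4^+2 * y1^+2 + x5^+2 * y2^+2
  + (x1 * y3 + x4 * y2)^+2.

(* An SOS representation P = sum_p f_p^2, f_p(x, y) = sum_ij c_p(i,j) x_i y_j,
   has the Gram tensor G(ij,kl) = sum_p c_p(i,j) c_p(k,l), and the values of P at
   sums of two basis vectors determine G(ij,kl) + G(il,kj).  For P53 (0-based
   positions) this pins G down on the nine positions 00 01 10 12 21 22 30 41 02: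
   positions whose monomial x_i^2 y_j^2 is absent from P53 carry only zero
   entries, which settles most entries; the identity c_p(3,1) = c_p(0,2) forced
   by the cross term x_0 x_3 y_1 y_2 settles the rest.  There G is the identity,
   so the r x 9 matrix (c_p(u)) has orthonormal columns and r >= 9, while the
   nine squares defining P53 show r = 9 is attained. *)

From Stdlib Require Import Rdefinitions.
From HB Require Import structures.
From mathcomp Require Import all_boot all_order all_algebra.
From mathcomp Require Import Rstruct ring lra.
Import Order.TTheory GRing.Theory Num.Theory.
Set Implicit Arguments.
Unset Strict Implicit.
Unset Printing Implicit Defensive.
Local Open Scope ring_scope.

Definition unitv k (i : 'I_k) : 'I_k -> R := fun a => (a == i)%:R.

Lemma sum_mul_unitv k (F : 'I_k -> R) (i : 'I_k) : \sum_(a < k) F a * unitv i a = F i.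
Proof.
rewrite (bigD1 i) //= big1 => [|a /negbTE ne_ai]; first by rewrite /unitv eqxx mulr1 addr0.
by rewrite /unitv ne_ai mulr0.
Qed.

Section Bilinear.
Variables m n : nat.
Implicit Types (c d : 'M[R]_(m, n)) (x : 'I_m -> R) (y : 'I_n -> R).

Lemma bilinDl c x x' y : bilin c (x \+ x') y = bilin c x y + bilin c x' y.
Proof.
rewrite /bilin -big_split; apply: eq_bigr => i _.
rewrite -big_split; apply: eq_bigr => j _ /=; ring.
Qed.

Lemma bilinDr c x y y' : bilin c x (y \+ y') = bilin c x y + bilin c x y'.
Proof.
rewrite /bilin -big_split; apply: eq_bigr => i _.
rewrite -big_split; apply: eq_bigr => j _ /=; ring.
Qed.

Lemma bilinD c d x y : bilin (c + d) x y = bilin c x y + bilin d x y.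
Proof.
rewrite /bilin -big_split; apply: eq_bigr => i _.
rewrite -big_split; apply: eq_bigr => j _ /=; rewrite mxE; ring.
Qed.

Lemma bilinZ a c x y : bilin (a *: c) x y = a * bilin c x y.
Proof.
rewrite /bilin mulr_sumr; apply: eq_bigr => i _.
rewrite mulr_sumr; apply: eq_bigr => j _; rewrite mxE; ring.
Qed.

Lemma bilin_unitv c i j : bilin c (unitv i) (unitv j) = c i j.
Proof.
rewrite /bilin -[RHS](sum_mul_unitv (fun a => c a j)); apply: eq_bigr => a _.
rewrite -(sum_mul_unitv (c a)) mulr_suml; apply: eq_bigr => b _; ring.
Qed.

Lemma bilin_delta i j x y : bilin (delta_mx i j) x y = x i * y j.
Proof.
rewrite /bilin -(sum_mul_unitv (fun a => x a * y j)); apply: eq_bigr => a _.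
rewrite -(sum_mul_unitv y) mulr_sumr mulr_suml; apply: eq_bigr => b _.
rewrite mxE -mulnb natrM /unitv; ring.
Qed.

End Bilinear.

Section GramTensor.
Variables m n : nat.

Definition gram r (c : 'I_r -> 'M[R]_(m, n)) i j k l : R :=
  \sum_(p < r) c p i j * c p k l.

Lemma gramC r (c : 'I_r -> 'M[R]_(m, n)) i j k l : gram c i j k l = gram c k l i j.
Proof. by apply: eq_bigr => p _; rewrite mulrC. Qed.

Lemma biquad_gram r (c : 'I_r -> 'M[R]_(m, n)) x y :
  biquad (gram c) x y = \sum_(p < r) bilin (c p) x y ^+ 2.
Proof.
rewrite /biquad /bilin; symmetry.
transitivity (\sum_(p < r) \sum_(i < m) \sum_(j < n) \sum_(k < m) \sum_(l < n)
   (c p i j * x i * y j) * (c p k l * x k * y l)).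
  apply: eq_bigr => p _; rewrite expr2 mulr_suml; apply: eq_bigr => i _.
  rewrite mulr_suml; apply: eq_bigr => j _; rewrite mulr_sumr; apply: eq_bigr => k _.
  by rewrite mulr_sumr.
rewrite exchange_big; apply: eq_bigr => i _; rewrite exchange_big; apply: eq_bigr => j _.
rewrite exchange_big; apply: eq_bigr => k _; rewrite exchange_big; apply: eq_bigr => l _.
rewrite /gram !mulr_suml; apply: eq_bigr => p _; ring.
Qed.

Lemma sum_sqr_sub_gram r (c : 'I_r -> 'M[R]_(m, n)) i j k l :
  \sum_(p < r) (c p i j - c p k l) ^+ 2
  = gram c i j i j - 2 * gram c i j k l + gram c k l k l.
Proof.
rewrite /gram mulr_sumr -sumrB -big_split /=; apply: eq_bigr => p _; ring.
Qed.

Lemma gram_diag_eq0 r (c : 'I_r -> 'M[R]_(m, n)) i j :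
  gram c i j i j = 0 -> forall p, c p i j = 0.
Proof.
move=> /psumr_eq0P c0 p; apply/eqP; rewrite -sqrf_eq0 expr2; apply/eqP.
by apply: c0 => // q _; rewrite -expr2 sqr_ge0.
Qed.

Lemma gram_eq0 r (c : 'I_r -> 'M[R]_(m, n)) i j k l :
  gram c i j i j = 0 -> gram c i j k l = 0.
Proof. by move=> /gram_diag_eq0 c0; apply: big1 => p _; rewrite c0 mul0r. Qed.

Lemma eq_gram_of_entries r (c : 'I_r -> 'M[R]_(m, n)) i j i' j' :
  (forall p, c p i j = c p i' j') -> forall k l, gram c i j k l = gram c i' j' k l.
Proof. by move=> c_ij k l; apply: eq_bigr => p _; rewrite c_ij. Qed.

Lemma gram_orthonormal_leq r s (c : 'I_r -> 'M[R]_(m, n))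
    (ri : 'I_s -> 'I_m) (ci : 'I_s -> 'I_n) :
  (forall a b, gram c (ri a) (ci a) (ri b) (ci b) = (a == b)%:R) -> (s <= r)%N.
Proof.
move=> orth; pose M := \matrix_(a, p) c p (ri a) (ci a).
apply: (@mulmx1_min _ _ _ M M^T); apply/matrixP => a b.
by rewrite !mxE -orth; apply: eq_bigr => p _; rewrite !mxE.
Qed.

Variable P : ('I_m -> R) -> ('I_n -> R) -> R.

Definition sos_rep r (c : 'I_r -> 'M[R]_(m, n)) :=
  forall x y, P x y = \sum_(p < r) bilin (c p) x y ^+ 2.

Definition mixed_diff x x' y y' :=
  P (x \+ x') (y \+ y') - P x (y \+ y') - P x' (y \+ y') - P (x \+ x') y - P (x \+ x') y'
  + P x y + P x y' + P x' y + P x' y'.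

Lemma mixed_diff_unitv r (c : 'I_r -> 'M[R]_(m, n)) : sos_rep c -> forall i j k l,
  mixed_diff (unitv i) (unitv k) (unitv j) (unitv l) = 2 * (gram c i j k l + gram c i l k j).
Proof.
move=> rep_c i j k l; rewrite /mixed_diff !rep_c /gram -big_split mulr_sumr.
rewrite -!sumrB -!big_split /=.
apply: eq_bigr => p _; rewrite !bilinDl !bilinDr !bilin_unitv; ring.
Qed.

Section TwoRepresentations.
Variables (r s : nat) (c : 'I_r -> 'M[R]_(m, n)) (d : 'I_s -> 'M[R]_(m, n)).
Hypotheses (rep_c : sos_rep c) (rep_d : sos_rep d).

Lemma gram_sym_eq i j k l :
  gram c i j k l + gram c i l k j = gram d i j k l + gram d i l k j.
Proof.
by have := mixed_diff_unitv rep_c i j k l; rewrite (mixed_diff_unitv rep_d); lra.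
Qed.

Lemma gram_row_eq i j l : gram c i j i l = gram d i j i l.
Proof. have := gram_sym_eq i j i l; rewrite (gramC c i l) (gramC d i l); lra. Qed.

Lemma gram_col_eq i j k : gram c i j k j = gram d i j k j.
Proof. have := gram_sym_eq i j k j; lra. Qed.

Lemma gram_cross_eq i j k l :
  gram c i l k j = gram d i l k j -> gram c i j k l = gram d i j k l.
Proof. have := gram_sym_eq i j k l; lra. Qed.

Lemma gram_eq_of_zeros (Z : seq ('I_m * 'I_n)) :
  {in Z, forall u, gram d u.1 u.2 u.1 u.2 = 0} -> forall i j k l,
  [|| i == k, j == l | has (mem Z) [:: (i, j); (k, l); (i, l); (k, j)]] ->
  gram c i j k l = gram d i j k l.
Proof.
move=> Z0 i j k l /or3P[/eqP<- | /eqP<- | /hasP[[i' j'] corner /Z0 /= d0]].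
- exact: gram_row_eq.
- exact: gram_col_eq.
have c0 : gram c i' j' i' j' = 0 by rewrite gram_row_eq.
move: corner c0 d0; rewrite !inE => /or4P[] /eqP[-> ->] c0 d0.
- by rewrite (gram_eq0 _ _ c0) (gram_eq0 _ _ d0).
- by rewrite gramC [RHS]gramC (gram_eq0 _ _ c0) (gram_eq0 _ _ d0).
- by apply: gram_cross_eq; rewrite (gram_eq0 _ _ c0) (gram_eq0 _ _ d0).
- by apply: gram_cross_eq; rewrite gramC [RHS]gramC (gram_eq0 _ _ c0) (gram_eq0 _ _ d0).
Qed.

End TwoRepresentations.
End GramTensor.

Lemma BSR_ge_of_sos_rank m n k (P : ('I_m -> R) -> ('I_n -> R) -> R) :
  sos_rank P k -> BSR_ge m n k.
Proof.
case=> -[c rep_c] low; exists (gram c); split; first by exists k, c => x y; exact: biquad_gram.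
move=> r lt_rk [d rep_d]; apply: (low r lt_rk); exists d => x y.
by rewrite rep_c -biquad_gram rep_d.
Qed.

Lemma inord_natr n k : (k < n.+2)%N -> (inord k : 'I_n.+2) = k%:R.
Proof. by move=> lt_kn; rewrite -[LHS]natr_Zp inordK. Qed.

Lemma P53E x y : P53 x y =
  x 0 ^+ 2 * y 0 ^+ 2 + x 0 ^+ 2 * y 1 ^+ 2 + x 1 ^+ 2 * y 0 ^+ 2 + x 1 ^+ 2 * y 2 ^+ 2
  + x 2 ^+ 2 * y 1 ^+ 2 + x 2 ^+ 2 * y 2 ^+ 2 + x 3 ^+ 2 * y 0 ^+ 2 + x 4 ^+ 2 * y 1 ^+ 2
  + (x 0 * y 2 + x 3 * y 1) ^+ 2.
Proof. by rewrite /P53 !inord_natr. Qed.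

Definition P53_row (a : 'I_9) : 'I_5 := nth 0 [:: 0; 0; 1; 1; 2; 2; 3; 4; 0] a.
Definition P53_col (a : 'I_9) : 'I_3 := nth 0 [:: 0; 1; 0; 2; 1; 2; 0; 1; 2] a.

Definition P53_terms (a : 'I_9) : 'M[R]_(5, 3) :=
  delta_mx (P53_row a) (P53_col a) + (a == ord_max)%:R *: delta_mx 3 1.

Lemma P53_sos_rep : sos_rep P53 P53_terms.
Proof.
move=> x y; rewrite P53E; under eq_bigr do rewrite bilinD bilinZ !bilin_delta.
by rewrite !big_ord_recl big_ord0 /P53_row /P53_col /=; ring.
Qed.

Definition P53_zeros : seq ('I_5 * 'I_3) := [:: (1, 1); (2, 0); (3, 2); (4, 0); (4, 2)].

Lemma P53_termsE p i j : P53_terms p i j =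
  ((i == P53_row p) && (j == P53_col p))%:R + (p == ord_max)%:R * ((i == 3) && (j == 1))%:R.
Proof. by rewrite !mxE. Qed.

Lemma P53_terms_zeros p : {in P53_zeros, forall u, P53_terms p u.1 u.2 = 0}.
Proof.
have Z31 : (3, 1) \notin P53_zeros by [].
have Zp : (P53_row p, P53_col p) \notin P53_zeros.
  by case: p => [[|[|[|[|[|[|[|[|[|p]]]]]]]]] ?].
move=> u Zu; rewrite P53_termsE -!xpair_eqE -surjective_pairing.
have /negbTE-> : u != (P53_row p, P53_col p) by apply: contraNneq Zp => <-.
have /negbTE-> : u != (3, 1) by apply: contraNneq Z31 => <-.
by rewrite mulr0 addr0.
Qed.

Lemma P53_terms_31_02 p : P53_terms p 3 1 = P53_terms p 0 2.
Proof.
have [/negbTE e31 e02] : (3, 1) != (P53_row p, P53_col p) /\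
                      ((0, 2) == (P53_row p, P53_col p)) = (p == ord_max).
  by case: p => [[|[|[|[|[|[|[|[|[|p]]]]]]]]] ?].
rewrite !P53_termsE -!xpair_eqE e31 e02 eqxx.
have -> : ((0, 2) == (3, 1) :> 'I_5 * 'I_3) = false by [].
by rewrite mulr1 mulr0 add0r addr0.
Qed.

Lemma P53_terms_nine p a : P53_terms p (P53_row a) (P53_col a) = (p == a)%:R.
Proof.
have [e_pa /negbTE e31] : ((P53_row a, P53_col a) == (P53_row p, P53_col p)) = (p == a) /\
                         (P53_row a, P53_col a) != (3, 1).
  by case: p a => [[|[|[|[|[|[|[|[|[|p]]]]]]]]] ?] [[|[|[|[|[|[|[|[|[|a]]]]]]]]] ?].
by rewrite P53_termsE -!xpair_eqE e_pa e31 mulr0 addr0.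
Qed.

Lemma gram_P53_terms_zeros :
  {in P53_zeros, forall u, gram P53_terms u.1 u.2 u.1 u.2 = 0}.
Proof.
by move=> u Zu; apply: gram_eq0; apply: big1 => p _; rewrite P53_terms_zeros ?mul0r.
Qed.

Lemma gram_P53_terms_nine a b :
  gram P53_terms (P53_row a) (P53_col a) (P53_row b) (P53_col b) = (a == b)%:R.
Proof.
rewrite /gram (bigD1 a) //= !P53_terms_nine eqxx mul1r big1 ?addr0 // => p /negbTE ne_pa.
by rewrite !P53_terms_nine ne_pa mul0r.
Qed.

Section P53Representation.
Variables (r : nat) (c : 'I_r -> 'M[R]_(5, 3)).
Hypothesis rep_c : sos_rep P53 c.

Let gram_eq := gram_eq_of_zeros rep_c P53_sos_rep gram_P53_terms_zeros.
Let cross := gram_cross_eq rep_c P53_sos_rep.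

Lemma P53_rep_31_02 p : c p 3 1 = c p 0 2.
Proof.
have /(psumr_eq0P (fun q _ => sqr_ge0 _)) dev0 : \sum_(q < r) (c q 3 1 - c q 0 2) ^+ 2 = 0.
  rewrite sum_sqr_sub_gram !gram_eq // -sum_sqr_sub_gram.
  by apply: big1 => q _; rewrite P53_terms_31_02 subrr expr0n.
by apply/eqP; rewrite -subr_eq0 -sqrf_eq0 dev0.
Qed.

Lemma gram_P53_rep_nine a b :
  gram c (P53_row a) (P53_col a) (P53_row b) (P53_col b) = (a == b)%:R.
Proof.
rewrite -gram_P53_terms_nine.
wlog le_ab : a b / (a <= b)%N.
  move=> sym_ab; case: (leqP a b) => [/sym_ab // | /ltnW /sym_ab].
  by rewrite gramC [RHS]gramC.
have c02 := eq_gram_of_entries P53_rep_31_02; have t02 := eq_gram_of_entries P53_terms_31_02.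
have e02_10 : gram c 0 2 1 0 = gram P53_terms 0 2 1 0 by rewrite -c02 -t02 gram_eq.
have e02_21 : gram c 0 2 2 1 = gram P53_terms 0 2 2 1 by rewrite -c02 -t02 gram_eq.
have e31_00 : gram c 3 1 0 0 = gram P53_terms 3 1 0 0 by rewrite c02 t02 gram_eq.
case: a le_ab => [[|[|[|[|[|[|[|[|[|a]]]]]]]]] ?] //;
  case: b => [[|[|[|[|[|[|[|[|[|b]]]]]]]]] ?] // _.
all: rewrite /P53_row /P53_col /=; try by apply: gram_eq.
(* The remaining entries pair positions spanning a rectangle of nonzero
   positions; they are reached through the alias (3,1) of (0,2). *)
- exact: cross e02_10.
- exact: cross e02_21.
- by apply: cross; rewrite gramC [RHS]gramC.
- by rewrite gramC [RHS]gramC.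
- by rewrite gramC [RHS]gramC.
Qed.

End P53Representation.

Lemma P53_sos_lower r : sos_with r P53 -> (9 <= r)%N.
Proof. by case=> c rep_c; apply: gram_orthonormal_leq (gram_P53_rep_nine rep_c). Qed.

Theorem corollary4p2 : BSR_ge 5 3 9 /\ sos_rank P53 9.
Proof.
have rank9 : sos_rank P53 9.
  split=> [|r lt_r9 /P53_sos_lower]; first by exists P53_terms; exact: P53_sos_rep.
  by rewrite leqNgt lt_r9.
by split; first exact: BSR_ge_of_sos_rank rank9.
Qed.
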